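(* Let $\mathbb{F}$ be a finite field with $q$ elements, let $\gamma\in(0,1/2]$, and let $H\subseteq\mathbb{F}^2$ with $|H|=2\gamma q^2$. Let $r$ be an integer with $\frac{2\ln q}{\gamma^2}<r\le\gamma q$. Then there exist subsets $S_1,S_2\subseteq\mathbb{F}$ such that (1) $|S_1|=r$; (2) $|S_2|\ge\gamma q$; (3) $|(\mathbb{F}\times S_2)\cap H|\ge|H|/2=\gamma q^2$; (4) for all $b\in S_2$, $|\{(a,b):a\in\mathbb{F}\}\cap H|\ge\gamma q$; (5) for all $b\in S_2$, $|\{(a,b):a\in S_1\}\cap H|\ge\frac{\gamma}{2}|S_1|$. *)

From HB Require Import structures.
From mathcomp Require Import all_boot all_order all_algebra all_field.
From mathcomp Require Import all_classical all_reals all_analysis.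

From HB Require Import structures.
From mathcomp Require Import all_boot all_order all_algebra all_field.
From mathcomp Require Import all_classical all_reals all_analysis.
From mathcomp Require Import ring lra zify.
Import Order.TTheory GRing.Theory Num.Theory numFieldNormedType.Exports.

(** The heavy slices, i.e. the [b] such that [slice H b = [set a | (a, b) \in H]]
   has at least [gamma q] elements, carry at least half of [H], so there are at
   least [gamma q] of them.  For a uniformly random [r]-subset [S1] of [F] and a
   heavy [b], the size of [S1 :&: slice H b] is hypergeometric with mean at least
   [gamma r]; its exponential moment is dominated by the binomial one, which gives
   the Chernoff bound [exp (- r gamma ^ 2 / 2)] for the probability that it drops
   below [gamma r / 2].  As [q exp (- r gamma ^ 2 / 2) < 1], a union bound over the
   at most [q] heavy slices leaves a good [S1].  Probabilities are counts of
   [r]-subsets throughout. *)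

Section SubsetCounting.
Context {T : finType}.
Import mathcomp.boot.fintype mathcomp.boot.finset.

Lemma card_supsets_of_size (A : {set T}) r : #|A| <= r ->
  #|[set S : {set T} | (A \subset S) && (#|S| == r)]| = 'C(#|T| - #|A|, r - #|A|).
Proof.
move=> Ar.
have cardC : #|~: A| = #|T| - #|A| by rewrite -(cardsC A) addKn.
rewrite -cardC -cards_draws.
set D := [set S : {set T} | S \subset ~: A & #|S| == r - #|A|].
have inj : {in D &, injective (fun S => S :|: A)}.
  move=> S1 S2; rewrite !inE => /andP[/subsetP s1 _] /andP[/subsetP s2 _] eq12.
  apply/setP => x; move/setP: eq12 => /(_ x); rewrite !inE.
  case xA: (x \in A); last by rewrite !orbF.
  move=> _; case x1: (x \in S1); first by have := s1 _ x1; rewrite inE xA.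
  by case x2: (x \in S2) => //; have := s2 _ x2; rewrite inE xA.
rewrite -(card_in_imset inj); apply: eq_card => S.
rewrite inE; apply/andP/imsetP.
- move=> [AS /eqP cS]; exists (S :\: A).
    by rewrite inE subsetDr cardsD (setIidPr AS) cS /=.
  apply/setP => x; rewrite !inE; case: (boolP (x \in A)) => xA /=.
    exact: (subsetP AS).
  by rewrite orbF.
- move=> [S' + ->]; rewrite inE => /andP[S'A /eqP cS']; split; first exact: subsetUr.
  have /disjoint_setI0 S'A0 : [disjoint S' & A] by rewrite disjoints_subset.
  by rewrite cardsU S'A0 cards0 subn0 cS' subnK.
Qed.

(* Double counting of the pairs (X, S) with X a k-subset of S :&: B. *)
Lemma sum_bin_card_setI (B : {set T}) k r : k <= r ->
  \sum_(S : {set T} | #|S| == r) 'C(#|S :&: B|, k) = 'C(#|B|, k) * 'C(#|T| - k, r - k).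
Proof.
move=> kr.
transitivity (\sum_(S : {set T} | #|S| == r)
                \sum_(X : {set T} | (X \subset S :&: B) && (#|X| == k)) 1).
  by apply: eq_bigr => S _; rewrite sum1dep_card cards_draws.
rewrite (exchange_big_dep (fun X : {set T} => (X \subset B) && (#|X| == k))) /=;
  last by move=> S X _ /andP[XSB ->]; rewrite andbT (subset_trans XSB) ?subsetIr.
transitivity (\sum_(X : {set T} | (X \subset B) && (#|X| == k)) 'C(#|T| - k, r - k)).
  apply: eq_bigr => X /andP[XB /eqP cX].
  rewrite sum1dep_card -cX -card_supsets_of_size ?cX //.
  by apply: eq_card => S; rewrite !inE subsetI XB eqxx !andbT andbC.
by rewrite sum_nat_const -cards_draws; congr (_ * _); apply: eq_card => X; rewrite !inE.
Qed.

Lemma leq_card_bigcup {I : finType} (J : {set I}) (B : I -> {set T}) :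
  #|\bigcup_(i in J) B i| <= \sum_(i in J) #|B i|.
Proof.
elim/big_rec2: _ => [|i n U _ le_Un]; first by rewrite cards0.
by rewrite (leq_trans (leq_card_setU _ _).1) // leq_add2l.
Qed.

End SubsetCounting.

Lemma bin_trinomial q r k : k <= r -> 'C(q, r) * 'C(r, k) = 'C(q, k) * 'C(q - k, r - k).
Proof.
move=> kr; have := sum_bin_card_setI [set: 'I_q] k r kr.
rewrite cardsT card_ord => <-.
rewrite (eq_bigr (fun _ => 'C(r, k))); last by move=> S /eqP cS; rewrite finset.setIT cS.
rewrite sum_nat_const -[in LHS](card_ord q) -card_draws; congr (_ * _).
by apply: eq_card => S; rewrite inE.
Qed.

Lemma leq_ffact_expn b q k : b <= q -> b ^_ k * q ^ k <= q ^_ k * b ^ k.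
Proof.
move=> bq; elim: k => [|k IH]; first by rewrite !ffactn0 !expn0.
rewrite !ffactnSr !expnS.
have step : (b - k) * q <= (q - k) * b.
  by rewrite !mulnBl mulnC leq_sub2l // leq_mul2l bq orbT.
have -> : b ^_ k * (b - k) * (q * q ^ k) = (b ^_ k * q ^ k) * ((b - k) * q) by nia.
have -> : q ^_ k * (q - k) * (b * b ^ k) = (q ^_ k * b ^ k) * ((q - k) * b) by nia.
exact: leq_mul.
Qed.

Lemma leq_bin_expn b q k : b <= q -> 'C(b, k) * q ^ k <= 'C(q, k) * b ^ k.
Proof.
move=> bq; rewrite -(leq_pmul2r (fact_gt0 k)) mulnAC [X in _ <= X]mulnAC !bin_ffact.
exact: leq_ffact_expn.
Qed.

Local Open Scope ring_scope.

Section ExpBounds.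
Context {R : realType}.

Lemma ger0_is_derive_ndecr {g g' : R -> R} {a b : R} :
  (forall x, is_derive x (1 : R) g (g' x)) -> (forall x, a < x < b -> 0 <= g' x) ->
  a <= b -> g a <= g b.
Proof.
move=> dg g'_ge0 ab; apply: (@ger0_derive1_ndecr R g a b) => //.
- move=> x; rewrite in_itv /= => xab.
  by rewrite derive1E (@derive_val _ _ _ _ _ _ _ (dg x)); apply: g'_ge0.
- apply: continuous_subspaceT => x; apply: differentiable_continuous.
  by apply/derivable1_diffP; case: (dg x).
Qed.

Lemma expRN_ge_taylor3 (z : R) : 0 <= z -> 1 - z + z ^+ 2 / 2 - z ^+ 3 / 6 <= expR (- z).
Proof.
move=> z0.
have dg x : is_derive x (1 : R) (fun y => - (expR y * (1 - y + y ^+ 2 / 2 - y ^+ 3 / 6)))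
                                 (expR x * x ^+ 3 / 6).
  by apply: is_derive_eq; rewrite /GRing.scale /=; field.
have mono := ger0_is_derive_ndecr dg _ z0.
have : expR z * (1 - z + z ^+ 2 / 2 - z ^+ 3 / 6) <= 1.
  rewrite -lerN2; apply: le_trans (mono _).
    by rewrite expR0 mul1r !expr0n /= !mul0r; lra.
  move=> x /andP[x0 _].
  by rewrite mulr_ge0 ?invr_ge0 ?mulr_ge0 ?expR_ge0 ?exprn_ge0 ?ltW.
by move=> bound; rewrite expRN -(ler_pM2l (expR_gt0 z)) mulfV ?expR_eq0.
Qed.

(* [65 / 24] is the Taylor polynomial of degree 4 of [expR] at [1]. *)
Lemma expRN1_le : expR (-1) <= 24 / 65 :> R.
Proof.
have dg x : is_derive x (1 : R)
    (fun y => expR y * (1 - y + y ^+ 2 / 2 - y ^+ 3 / 6 + y ^+ 4 / 24))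
    (expR x * x ^+ 4 / 24).
  by apply: is_derive_eq; rewrite /GRing.scale /=; field.
have mono := @ger0_is_derive_ndecr _ _ (-1) 0 dg.
have : expR (-1) * (65 / 24) <= 1 :> R.
  have -> : 65 / 24 = 1 - -1 + (-1) ^+ 2 / 2 - (-1) ^+ 3 / 6 + (-1) ^+ 4 / 24 :> R by field.
  apply: le_trans (mono _ _) _.
  - move=> x _; apply: mulr_ge0; last by rewrite invr_ge0.
    by rewrite mulr_ge0 ?expR_ge0 // (_ : 4 = 2 * 2)%N // exprM sqr_ge0.
  - lra.
  - by rewrite expR0 mul1r !expr0n /= !mul0r; lra.
have := expR_gt0 (-1 : R); lra.
Qed.

Lemma mix_le_taylor3 (c : R) : 0 < c -> c <= 1 / 2 ->
  24 / 65 * c + (1 - c) <= 1 - (c / 2 + c ^+ 2 / 2) + (c / 2 + c ^+ 2 / 2) ^+ 2 / 2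
                                - (c / 2 + c ^+ 2 / 2) ^+ 3 / 6.
Proof.
move=> c0 c1; set z := c / 2 + c ^+ 2 / 2.
have z0 : 0 <= z by rewrite /z; nra.
have z1 : z <= 3 / 8 by rewrite /z; nra.
have z3 : z ^+ 3 / 6 <= z ^+ 2 * (3 / 8) / 6.
  by rewrite ler_pM2r // exprSr ler_wpM2l ?sqr_ge0.
suff : z - 7 / 16 * z ^+ 2 <= 41 / 65 * c by lra.
have cubic : 25 * c - 14 * c ^+ 2 - 7 * c ^+ 3 <= 65 / 8.
  have : 0 <= (1 / 2 - c) * (65 / 4 - 35 / 2 * c - 7 * c ^+ 2) by apply: mulr_ge0; nra.
  lra.
have : 0 <= c * (65 / 8 - (25 * c - 14 * c ^+ 2 - 7 * c ^+ 3)) by apply: mulr_ge0; lra.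
rewrite /z; nra.
Qed.

(* The Chernoff estimate for a Bernoulli variable of mean [1 - c] at tilt [1]. *)
Lemma mix_expR1_le (c : R) : 0 < c -> c <= 1 / 2 ->
  c + (1 - c) * expR 1 <= expR (1 - c / 2 - c ^+ 2 / 2).
Proof.
move=> c0 c1.
have e0 := expR_gt0 (1 : R).
have ee : expR (-1) * expR 1 = 1 :> R by rewrite expRN mulVf ?expR_eq0.
have z0 : 0 <= c / 2 + c ^+ 2 / 2 by nra.
have lb := expRN_ge_taylor3 _ z0.
have := mix_le_taylor3 _ c0 c1; have := expRN1_le.
rewrite (_ : 1 - c / 2 - c ^+ 2 / 2 = 1 + - (c / 2 + c ^+ 2 / 2)); last by ring.
rewrite expRD; set E := expR (- _) in lb *; set e := expR 1 in e0 ee *.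
set f := expR (-1) in ee * => f_le mix.
have -> : c + (1 - c) * e = e * (c * f + (1 - c)).
  by rewrite mulrDr mulrCA (mulrC e f) ee mulr1 mulrC.
by rewrite ler_pM2l //; nra.
Qed.

Lemma mulr_expRN_lt1 {x y : R} : 0 < x -> ln x < y -> x * expR (- y) < 1.
Proof. by move=> x0 lnx; rewrite -[x]lnK ?posrE // -expRD expR_lt1; lra. Qed.

End ExpBounds.

Section HypergeometricTail.
Context {R : realType} {T : finType}.
Import mathcomp.boot.fintype mathcomp.boot.finset.

(* The exponential moment of |S :&: B| for a uniform r-subset S is at most
   the binomial one: compare the k-th factorial moments via [leq_bin_expn]. *)
Lemma sum_expr_card_setI_le (B : {set T}) r (u : R) : 1 <= u -> (0 < #|T|)%N ->
  \sum_(S : {set T} | #|S| == r) u ^+ #|S :&: B| <=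
  'C(#|T|, r)%:R * (#|B|%:R / #|T|%:R * (u - 1) + 1) ^+ r.
Proof.
move=> u1 T0; set x := u - 1; have x0 : 0 <= x by rewrite /x subr_ge0.
have expand (S : {set T}) :
    #|S| == r -> u ^+ #|S :&: B| = \sum_(k < r.+1) x ^+ k *+ 'C(#|S :&: B|, k).
  move=> /eqP cS; have SBr : (#|S :&: B| <= r)%N by rewrite -cS subset_leq_card ?subsetIl.
  rewrite -[u](subrK 1) -/x exprD1n (big_ord_widen r.+1 (fun k => x ^+ k *+ 'C(_, k))) //.
  rewrite big_mkcond; apply: eq_bigr => k _; case: ifP => // /negbT.
  by rewrite -leqNgt => /bin_small ->.
rewrite (eq_bigr _ expand) exchange_big /= exprD1n mulr_sumr; apply: ler_sum => k _.
have kr : (k <= r)%N by rewrite -ltnS.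
rewrite sumrMnr sum_bin_card_setI //.
set q := #|T|; set b := #|B|.
have qk0 : 0 < q%:R ^+ k :> R by rewrite exprn_gt0 ?ltr0n.
have moment : ('C(b, k) * 'C(q - k, r - k))%:R * q%:R ^+ k
              <= ('C(q, r) * 'C(r, k))%:R * b%:R ^+ k :> R.
  rewrite bin_trinomial // -!natrX -!natrM ler_nat mulnAC [X in (_ <= X)%N]mulnAC.
  by rewrite leq_mul // leq_bin_expn ?max_card.
rewrite -[X in X <= _]mulr_natr -[X in _ <= _ * X]mulr_natr exprMn expr_div_n.
have -> : 'C(q, r)%:R * (b%:R ^+ k / q%:R ^+ k * x ^+ k * 'C(r, k)%:R) =
          x ^+ k * (('C(q, r) * 'C(r, k))%:R * b%:R ^+ k / q%:R ^+ k) :> R.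
  by rewrite natrM; ring.
by rewrite ler_wpM2l ?exprn_ge0 // ler_pdivlMr.
Qed.

Lemma card_upper_tail_le (B : {set T}) r (c : R) :
  0 < c -> c <= 1 / 2 -> (0 < #|T|)%N -> #|B|%:R <= (1 - c) * #|T|%:R ->
  #|[set S : {set T} | (#|S| == r) && (r%:R - c / 2 * r%:R < #|S :&: B|%:R)]|%:R
    <= 'C(#|T|, r)%:R * expR (- (r%:R * c ^+ 2 / 2)).
Proof.
move=> c0 c1 T0 Bsmall; set Bad := [set S : {set T} | _].
set e := expR (1 : R); set t := r%:R - c / 2 * r%:R.
have e1 : 1 <= e by rewrite /e -expR0 ler_expR.
have markov : #|Bad|%:R * expR t <= \sum_(S : {set T} | #|S| == r) e ^+ #|S :&: B|.
  rewrite (bigID (fun S : {set T} => t < #|S :&: B|%:R)) /= -[X in X <= _]addr0.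
  apply: lerD; last by apply: sumr_ge0 => S _; rewrite exprn_ge0 // (le_trans ler01).
  rewrite -sum1_card natr_sum mulr_suml.
  rewrite [X in _ <= X](eq_bigl (fun S => S \in Bad)); last by move=> S; rewrite inE.
  apply: ler_sum => S; rewrite inE => /andP[_ tS].
  by rewrite mul1r /e -expRM_natl mulr1 ler_expR ltW.
have mix : #|B|%:R / #|T|%:R * (e - 1) + 1 <= c + (1 - c) * e.
  have pB : #|B|%:R / #|T|%:R <= 1 - c :> R by rewrite ler_pdivrMr ?ltr0n.
  have : #|B|%:R / #|T|%:R * (e - 1) <= (1 - c) * (e - 1) by rewrite ler_wpM2r ?subr_ge0.
  lra.
have moment : (#|B|%:R / #|T|%:R * (e - 1) + 1) ^+ r <= expR (r%:R * (1 - c / 2 - c ^+ 2 / 2)).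
  have mix0 : 0 <= c + (1 - c) * e by apply: addr_ge0; [exact: ltW | apply: mulr_ge0; lra].
  rewrite expRM_natl; apply: le_trans (lerXn2r _ _ _ mix) _.
  - by rewrite nnegrE addr_ge0 // mulr_ge0 ?divr_ge0 ?subr_ge0.
  - by rewrite nnegrE.
  - by rewrite lerXn2r ?nnegrE ?expR_ge0 ?mix_expR1_le.
rewrite -(ler_pM2r (expR_gt0 t)) -[X in _ <= X]mulrA -expRD.
have -> : - (r%:R * c ^+ 2 / 2) + t = r%:R * (1 - c / 2 - c ^+ 2 / 2) by rewrite /t; ring.
apply: (le_trans markov); apply: (le_trans (sum_expr_card_setI_le B r e e1 T0)).
by rewrite ler_wpM2l.
Qed.

Lemma card_lower_tail_le (A : {set T}) r (c : R) :
  0 < c -> c <= 1 / 2 -> (0 < #|T|)%N -> c * #|T|%:R <= #|A|%:R ->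
  #|[set S : {set T} | (#|S| == r) && (#|S :&: A|%:R < c / 2 * r%:R)]|%:R
    <= 'C(#|T|, r)%:R * expR (- (r%:R * c ^+ 2 / 2)).
Proof.
move=> c0 c1 T0 Alarge; apply: le_trans (card_upper_tail_le (~: A) r c c0 c1 T0 _).
  rewrite ler_nat subset_leq_card //; apply/subsetP => S; rewrite !inE.
  case/andP=> /eqP cS small; rewrite cS eqxx /=.
  move/(congr1 (fun n => n%:R : R)): (cardsID A S); rewrite setDE cS natrD.
  by lra.
by move/(congr1 (fun n => n%:R : R)): (cardsC A); rewrite natrD; lra.
Qed.

Lemma exists_subset_large_traces {I : finType} {J : {set I}} {A : I -> {set T}} {r} {c : R} :
  0 < c -> c <= 1 / 2 -> (0 < #|T|)%N -> (r <= #|T|)%N ->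
  (forall i, i \in J -> c * #|T|%:R <= #|A i|%:R) ->
  #|J|%:R * expR (- (r%:R * c ^+ 2 / 2)) < 1 ->
  exists S : {set T}, #|S| = r /\ forall i, i \in J -> c / 2 * r%:R <= #|S :&: A i|%:R.
Proof.
move=> c0 c1 T0 rT Alarge JE; set E := expR _ in JE.
have [S /andP[/eqP cS /forall_inP good] | none] := pickP (fun S : {set T} =>
  (#|S| == r) && [forall i in J, c / 2 * r%:R <= #|S :&: A i|%:R]).
  by exists S.
pose Bad i := [set S : {set T} | (#|S| == r) && (#|S :&: A i|%:R < c / 2 * r%:R)].
have cover : [set S : {set T} | #|S| == r] \subset \bigcup_(i in J) Bad i.
  apply/subsetP => S; rewrite inE => cS; move/negbT: (none S); rewrite cS /=.
  by case/forall_inPn => i iJ small; apply/bigcupP; exists i; rewrite // inE cS ltNge.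
exfalso; have := leq_trans (subset_leq_card cover) (leq_card_bigcup J Bad).
rewrite card_draws -(ler_nat R) natr_sum leNgt => /negP; apply.
apply: le_lt_trans (_ : _ <= \sum_(i in J) 'C(#|T|, r)%:R * E) _.
  by apply: ler_sum => i iJ; apply: card_lower_tail_le; rewrite ?Alarge.
rewrite sumr_const -[X in X < _]mulr_natl mulrCA -[X in _ < X]mulr1 ltr_pM2l //.
by rewrite ltr0n bin_gt0.
Qed.

End HypergeometricTail.

Section Slices.
Context {F : finType} (H : {set F * F}).
Import mathcomp.boot.fintype mathcomp.boot.finset.

Definition slice b : {set F} := [set a | (a, b) \in H].

Lemma card_slice_setI (S : {set F}) b :
  #|[set p : F * F | (p.1 \in S) && (p.2 == b)] :&: H| = #|S :&: slice b|.
Proof.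
have inj : injective (fun a : F => (a, b)) by move=> x y [].
rewrite -(card_imset _ inj); apply: eq_card => -[a b'].
rewrite !inE /=; apply/idP/imsetP.
- by case/andP=> /andP[aS /eqP ->] aH; exists a; rewrite // !inE aS.
- by case=> a' + [-> ->]; rewrite !inE => /andP[-> ->]; rewrite eqxx.
Qed.

Lemma card_slice b : #|[set p : F * F | p.2 == b] :&: H| = #|slice b|.
Proof.
by rewrite -[slice b]setTI -card_slice_setI; apply: eq_card => p; rewrite !inE.
Qed.

Lemma card_setX_setI (S : {set F}) :
  #|setX [set: F] S :&: H| = (\sum_(b in S) #|slice b|)%N.
Proof.
rewrite -sum1_card (partition_big snd (mem S)) /=; last by move=> [a b]; rewrite !inE => /andP[].
apply: eq_bigr => b bS; rewrite sum1dep_card -card_slice; apply: eq_card => -[a b'].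
by rewrite !inE /=; case: eqP => [-> | _]; rewrite ?bS ?andbF ?andbT.
Qed.

Lemma card_sum_slice : #|H| = (\sum_b #|slice b|)%N.
Proof.
have -> : (\sum_b #|slice b| = \sum_(b in [set: F]) #|slice b|)%N.
  by apply: eq_bigl => b; rewrite inE.
by rewrite -card_setX_setI; apply: eq_card => -[a b]; rewrite !inE.
Qed.

End Slices.

Definition heavy_slices {R : numDomainType} {F : finType} (H : {set F * F}) (c : R) :=
  [set b | c * #|F|%:R <= #|slice H b|%:R].

Section HeavySlices.
Context {R : realFieldType} {F : finType} (H : {set F * F}) (c : R).
Hypotheses (c_ge0 : 0 <= c) (H_large : 2 * c * #|F|%:R ^+ 2 <= #|H|%:R).
Import mathcomp.boot.fintype mathcomp.boot.finset.

Lemma heavy_slices_mass :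
  (#|H|%:R : R) / 2 <= \sum_(b in heavy_slices H c) #|slice H b|%:R.
Proof.
set S2 := heavy_slices H c; set q := #|F|.
have light : \sum_(b | b \notin S2) #|slice H b|%:R <= c * q%:R ^+ 2.
  apply: le_trans (_ : _ <= \sum_(b | b \notin S2) c * q%:R) _.
    by apply: ler_sum => b; rewrite inE -ltNge => /ltW.
  rewrite sumr_const -[c * q%:R *+ _]mulr_natl mulrCA expr2 ler_wpM2l // ler_wpM2r ?ler0n //.
  by rewrite ler_nat max_card.
have := card_sum_slice H; move/(congr1 (fun n => n%:R : R)).
rewrite natr_sum (bigID (mem S2)) /= => mass_split; have := H_large; lra.
Qed.

Lemma card_heavy_slices : c * #|F|%:R <= #|heavy_slices H c|%:R.
Proof.
set S2 := heavy_slices H c; set q := #|F|.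
have [q0 | q_gt0] := posnP q; first by rewrite q0 mulr0.
have slice_le : \sum_(b in S2) #|slice H b|%:R <= #|S2|%:R * q%:R :> R.
  apply: le_trans (_ : _ <= \sum_(b in S2) q%:R) _; last by rewrite sumr_const mulr_natl.
  by apply: ler_sum => b _; rewrite ler_nat max_card.
have qR : 0 < q%:R :> R by rewrite ltr0n.
rewrite -(ler_pM2r qR); have := heavy_slices_mass; have := H_large; nra.
Qed.

End HeavySlices.

Theorem lemmaA2 (R : realType) (F : finFieldType) (gamma : R)
    (H : {set F * F}) (r : nat) :
  0 < gamma -> gamma <= 1 / 2 ->
  (#|H|%:R : R) = 2 * gamma * (#|F|%:R) ^+ 2 ->
  2 * ln (#|F|%:R : R) / gamma ^+ 2 < r%:R ->
  (r%:R : R) <= gamma * #|F|%:R ->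
  exists S1 S2 : {set F},
    [/\ #|S1| = r,
        gamma * #|F|%:R <= (#|S2|%:R : R),
        (#|H|%:R : R) / 2 <= #|finset.setX [set: F] S2 :&: H|%:R,
        (forall b, b \in S2 ->
           gamma * #|F|%:R <= (#|[set p : F * F | p.2 == b] :&: H|%:R : R)) &
        (forall b, b \in S2 ->
           gamma / 2 * #|S1|%:R <=
             (#|[set p : F * F | (p.1 \in S1) && (p.2 == b)] :&: H|%:R : R))].
Proof.
move=> g0 g1 Hcard r_lb r_ub.
have F0 : (0 < #|F|)%N by apply/card_gt0P; exists 0.
have H_large : 2 * gamma * #|F|%:R ^+ 2 <= #|H|%:R :> R by rewrite Hcard.
have rF : (r <= #|F|)%N.
  by rewrite -(ler_nat R); have : 0 <= #|F|%:R :> R by []; nra.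
have ln_lt : ln (#|F|%:R : R) < r%:R * gamma ^+ 2 / 2.
  by move: r_lb; rewrite ltr_pdivrMr ?exprn_gt0 //; lra.
have union_small : #|heavy_slices H gamma|%:R * expR (- (r%:R * gamma ^+ 2 / 2)) < 1.
  apply: le_lt_trans (mulr_expRN_lt1 _ ln_lt); last by rewrite ltr0n.
  by rewrite ler_wpM2r ?expR_ge0 // ler_nat max_card.
have heavy_large b : b \in heavy_slices H gamma -> gamma * #|F|%:R <= #|slice H b|%:R.
  by rewrite inE.
have [S1 [cS1 S1_large]] :=
  exists_subset_large_traces g0 g1 F0 rF heavy_large union_small.
exists S1, (heavy_slices H gamma); split.
- exact: cS1.
- exact: card_heavy_slices H gamma (ltW g0) H_large.
- by rewrite card_setX_setI natr_sum heavy_slices_mass ?(ltW g0).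
- by move=> b; rewrite card_slice inE.
- by move=> b /S1_large; rewrite card_slice_setI cS1.
Qed.
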